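(* Let $\mathcal{G}=(\mathfrak{g},[\cdot,\ldots,\cdot],\varepsilon,\alpha)$ be a multiplicative $n$-Hom-Lie color algebra. For each integer $p\geq 1$, the $p$th derived algebra $\mathcal{G}^p=(\mathfrak{g},[\cdot,\ldots,\cdot]^p,\varepsilon,\alpha^{2p})$, where $[\cdot,\ldots,\cdot]^p=\alpha^{2p-1}\circ[\cdot,\ldots,\cdot]$, is an $n$-Hom-Lie color algebra (and $\mathcal{G}^0:=\mathcal{G}$).
   Context: $\mathbb{K}$ is a field of characteristic zero and $\Gamma$ an abelian group. A bicharacter is a map $\varepsilon:\Gamma\times\Gamma\to\mathbb{K}\setminus\{0\}$ with $\varepsilon(a,b)\varepsilon(b,a)=1$, $\varepsilon(a,b+c)=\varepsilon(a,b)\varepsilon(a,c)$, $\varepsilon(a+b,c)=\varepsilon(a,c)\varepsilon(b,c)$. For homogeneous $x,y$, $\varepsilon(x,y)=\varepsilon(|x|,|y|)$ and $\varepsilon(x,y_1+\dots+y_k)=\varepsilon(|x|,|y_1|+\dots+|y_k|)$ ($=1$ for an empty sum). An $n$-Hom-Lie color algebra $(\mathfrak{g},[\cdot,\ldots,\cdot],\varepsilon,\alpha)$ is a $\Gamma$-graded vector space with an $n$-linear bracket of degree zero, a bicharacter $\varepsilon$ and a degree-zero linear map $\alpha$ such that for homogeneous elements: (i) $[x_1,\ldots,x_i,x_{i+1},\ldots,x_n]=-\varepsilon(x_i,x_{i+1})[x_1,\ldots,x_{i+1},x_i,\ldots,x_n]$; (ii) $[\alpha(x_1),\ldots,\alpha(x_{n-1}),[y_1,\ldots,y_n]]=\sum_{i=1}^n\varepsilon(x_1+\dots+x_{n-1},y_1+\dots+y_{i-1})[\alpha(y_1),\ldots,\alpha(y_{i-1}),[x_1,\ldots,x_{n-1},y_i],\alpha(y_{i+1}),\ldots,\alpha(y_n)]$.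 It is multiplicative if $\alpha([x_1,\ldots,x_n])=[\alpha(x_1),\ldots,\alpha(x_n)]$. *)

From HB Require Import structures.
From mathcomp Require Import all_boot all_order all_algebra.
Set Implicit Arguments. Unset Strict Implicit. Unset Printing Implicit Defensive.
Import GRing.Theory.
Local Open Scope ring_scope.

Section NHomLieColor.
Variables (K : fieldType) (Gam : zmodType) (V : lmodType K).

(* A Gam-grading of V: G a x means "x is homogeneous of degree a", i.e. x \in V_a.
   V = (+)_a V_a : each V_a is a subspace, every vector is a finite sum of
   homogeneous components of pairwise distinct degrees, and such sums are direct. *)
Definition is_grading (G : Gam -> V -> Prop) : Prop :=
  [/\ forall a, G a 0,
      forall a (k : K) x y, G a x -> G a y -> G a (k *: x + y),
      forall x : V, exists s : seq (Gam * V),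
        [/\ uniq (map fst s), (forall q, q \in s -> G q.1 q.2) &
            x = \sum_(q <- s) q.2]
    & forall s : seq (Gam * V),
        uniq (map fst s) -> (forall q, q \in s -> G q.1 q.2) ->
        \sum_(q <- s) q.2 = 0 -> forall q, q \in s -> q.2 = 0].

Definition bicharacter (eps : Gam -> Gam -> K) : Prop :=
  [/\ forall a b, eps a b != 0,
      forall a b, eps a b * eps b a = 1,
      forall a b c, eps a (b + c) = eps a b * eps a c
    & forall a b c, eps (a + b) c = eps a c * eps b c].

Definition upd N (t : {ffun 'I_N -> V}) (i : 'I_N) (v : V) : {ffun 'I_N -> V} :=
  [ffun j => if j == i then v else t j].

Definition swap_entries N (t : {ffun 'I_N -> V}) (i j : 'I_N) : {ffun 'I_N -> V} :=
  [ffun k => if k == i then t j else if k == j then t i else t k].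

(* the n-tuple (x_1, ..., x_{n-1}, v), with n = m.+1 *)
Definition ext m (x : {ffun 'I_m -> V}) (v : V) : {ffun 'I_m.+1 -> V} :=
  [ffun k => match unlift ord_max k with Some j => x j | None => v end].

(* n-Hom-Lie color algebra of arity n = m.+1 (the Hom-Jacobi identity involves
   n-1 = m elements x and n elements y). *)
Definition nHomLieColor m (G : Gam -> V -> Prop) (br : {ffun 'I_m.+1 -> V} -> V)
    (eps : Gam -> Gam -> K) (alpha : V -> V) : Prop :=
  is_grading G /\
      bicharacter eps /\
      (forall (t : {ffun 'I_m.+1 -> V}) i (k : K) x y,
          br (upd t i (k *: x + y)) = k *: br (upd t i x) + br (upd t i y)) /\
      (forall (d : 'I_m.+1 -> Gam) (t : {ffun 'I_m.+1 -> V}),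
          (forall i, G (d i) (t i)) -> G (\sum_i d i) (br t)) /\
      (forall (k : K) x y, alpha (k *: x + y) = k *: alpha x + alpha y) /\
      (forall a x, G a x -> G a (alpha x)) /\
      (forall (d : 'I_m.+1 -> Gam) (t : {ffun 'I_m.+1 -> V}),
          (forall i, G (d i) (t i)) ->
          forall i j : 'I_m.+1, nat_of_ord j = (nat_of_ord i).+1 ->
          br t = - eps (d i) (d j) *: br (swap_entries t i j)) /\
      (forall (dx : 'I_m -> Gam) (x : {ffun 'I_m -> V})
              (dy : 'I_m.+1 -> Gam) (y : {ffun 'I_m.+1 -> V}),
          (forall i, G (dx i) (x i)) -> (forall i, G (dy i) (y i)) ->
          br (ext [ffun k => alpha (x k)] (br y)) =
          \sum_(i < m.+1)
             eps (\sum_(k < m) dx k) (\sum_(j < m.+1 | (j < i)%N) dy j) *: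
             br [ffun j => if j == i then br (ext x (y i)) else alpha (y j)]).

Definition multiplicative m (br : {ffun 'I_m.+1 -> V} -> V) (alpha : V -> V) : Prop :=
  forall t, alpha (br t) = br [ffun k => alpha (t k)].

End NHomLieColor.

(** Yau twisting: composing the bracket and the twisting map of an n-Hom-Lie
    color algebra with a degree-preserving linear map [beta] that is a morphism
    of the bracket again gives an n-Hom-Lie color algebra, because both sides of
    the twisted Hom-Jacobi identity are [beta (beta _)] of the two sides of the
    original one.  For a multiplicative algebra, [beta := alpha^(2p-1)] is such
    a map and yields the derived algebra [G^p]. *)
From Pilot Require Import Defs.
From HB Require Import structures.
From mathcomp Require Import all_boot all_order all_algebra.
Set Implicit Arguments. Unset Strict Implicit.
Local Open Scope ring_scope.

Lemma iter_homo (T : Type) (P : T -> Prop) (f : T -> T) n :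
  {homo f : x / P x} -> {homo iter n f : x / P x}.
Proof. by move=> fP x Px; elim: n => //= n; apply: fP. Qed.

Section Twist.
Import GRing.Theory.
Variables (K : fieldType) (Gam : zmodType) (V : lmodType K) (m : nat).
Variables (G : Gam -> V -> Prop) (br : {ffun 'I_m.+1 -> V} -> V).
Variables (eps : Gam -> Gam -> K) (alpha : V -> V).

Lemma linear_iter n : linear alpha -> linear (iter n alpha).
Proof. by move=> alpha_lin k x y; elim: n => //= n ->; rewrite alpha_lin. Qed.

Lemma multiplicative_iter n :
  Defs.multiplicative br alpha -> Defs.multiplicative br (iter n alpha).
Proof.
move=> alpha_mult t; elim: n => [|n /= ->].
  by congr br; apply/ffunP => k; rewrite ffunE.
by rewrite alpha_mult; congr br; apply/ffunP => k; rewrite !ffunE.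
Qed.

Lemma map_ext (f : V -> V) (x : {ffun 'I_m -> V}) v :
  [ffun k => f (ext x v k)] = ext [ffun k => f (x k)] (f v).
Proof. by apply/ffunP => k; rewrite !ffunE; case: unlift => //= j; rewrite ffunE. Qed.

Lemma nHomLieColor_twist (beta : {linear V -> V}) br' alpha' :
  (forall a, {homo beta : x / G a x}) -> Defs.multiplicative br beta ->
  br' =1 beta \o br -> alpha' =1 beta \o alpha ->
  nHomLieColor G br eps alpha -> nHomLieColor G br' eps alpha'.
Proof.
move=> betaG beta_mult br'E alpha'E.
move=> [grG [eps_bichar [br_lin [brG [alpha_lin [alphaG [br_skew br_jacobi]]]]]]].
do 2 split => //.
split; first by move=> t i k x y; rewrite !br'E /= br_lin linearP.
split; first by move=> d t tG; rewrite br'E; apply/betaG/brG.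
split; first by move=> k x y; rewrite !alpha'E /= alpha_lin linearP.
split; first by move=> a x xG; rewrite alpha'E; apply/betaG/alphaG.
split.
  by move=> d t tG i j ji; rewrite !br'E /= (br_skew d t tG i j ji) linearZ.
move=> dx x dy y xG yG.
have beta_ext : br' (ext [ffun k => alpha' (x k)] (br' y))
    = beta (beta (br (ext [ffun k => alpha (x k)] (br y)))).
  rewrite br'E br'E /= [in RHS]beta_mult map_ext.
  by congr (beta (br (ext _ _))); apply/ffunP => k; rewrite !ffunE alpha'E.
rewrite beta_ext (br_jacobi _ _ _ _ xG yG) !linear_sum; apply: eq_bigr => i _.
rewrite !linearZ br'E /= [beta (br _)]beta_mult; congr (_ *: beta (br _)).
by apply/ffunP => j; rewrite !ffunE (fun_if beta) br'E alpha'E.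
Qed.

End Twist.

Theorem corollary3p4 (K : fieldType) (Gam : zmodType) (V : lmodType K) (m : nat)
    (G : Gam -> V -> Prop) (br : {ffun 'I_m.+1 -> V} -> V)
    (eps : Gam -> Gam -> K) (alpha : V -> V) :
  [pchar K] =i pred0 ->
  nHomLieColor G br eps alpha ->
  multiplicative br alpha ->
  forall p : nat, (1 <= p)%N ->
  nHomLieColor G (fun t => iter (2 * p).-1 alpha (br t)) eps (iter (2 * p) alpha).
Proof.
move=> _ Galg alpha_mult p p_gt0.
have [_ [_ [_ [_ [alpha_lin [alphaG _]]]]]] := Galg.
have -> : (2 * p = (2 * p).-1.+1)%N by rewrite prednK // muln_gt0.
set q := (2 * p).-1.
pose beta : {linear V -> V} :=
  HB.pack (iter q alpha) (GRing.isLinear.Build K V V *:%R _ (linear_iter q alpha_lin)).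
apply: (nHomLieColor_twist (beta := beta)) Galg => //.
- by move=> a; apply: iter_homo; apply: alphaG.
- exact: multiplicative_iter.
- exact: iterSr.
Qed.
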